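(* Assume (FWW) for a flow $\Phi_t$ on $\mathbb{R}^n$ and a $k$-cone $C$. Let $K\subset\mathbb{R}^n$ be a compact invariant set and let $\mathbb{R}^n=E_y\oplus F_y$, $y\in K$, be a $k$-exponential separation of $(\Phi_t,D\Phi_t)$ along $K$ associated with $C$. Then there exists a constant $\delta'>0$ such that $$\{v\in\mathbb{R}^n:\ d(v,E_y\cap S)\le\delta'\}\subset \operatorname{Int}C\quad\text{for every }y\in K,$$ where $S=\{v\in\mathbb{R}^n:\|v\|=1\}$ and $d(v,B)=\inf_{w\in B}\|v-w\|$.
   Context: A closed set $C\subset\mathbb{R}^n$ is a $k$-cone if $lv\in C$ for all $v\in C$, $l\in\mathbb{R}$, and the maximal dimension of a linear subspace contained in $C$ is $k$. $C$ is $k$-solid if there is a $k$-dimensional subspace $W$ with $W\setminus\{0\}\subset\operatorname{Int}C$. Write $x\sim y$ if $x-y\in C$ and $x\approx y$ if $x-y\in\operatorname{Int}C$. A flow $\Phi_t$ is strongly monotone with respect to a $k$-solid cone $C$ if $x\sim y$ implies $\Phi_t(x)\sim\Phi_t(y)$ for $t\ge0$, and $x\ne y$, $x\sim y$ imply $\Phi_t(x)\approx\Phi_t(y)$ for $t>0$. Assumption (FWW): the flow $\Phi_t$ on $\mathbb{R}^n$ is $C^{1,\alpha}$-smooth (the map $(t,x)\mapsto\Phi_t(x)$ is $C^1$ with locally $\alpha$-Hölder derivative, $\alpha\in(0,1]$), strongly monotone with respect to the $k$-cone $C$, and $D_x\Phi_t(C\setminus\{0\})\subset\operatorname{Int}C$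 for all $t>0$ and $x$. A $k$-exponential separation along a compact invariant set $K$ associated with $C$ consists of a continuous (in the Grassmannian gap metric) family of $k$-dimensional subspaces $E_x$ and a continuous family of $(n-k)$-dimensional subspaces $F_x$, $x\in K$, such that: $\mathbb{R}^n=E_x\oplus F_x$; $D_x\Phi_tE_x=E_{\Phi_t(x)}$ and $D_x\Phi_tF_x\subset F_{\Phi_t(x)}$ for $t>0$; there are $M>0$, $0<\gamma<1$ with $\|D_x\Phi_tw\|\le M\gamma^t\|D_x\Phi_tv\|$ for all $x\in K$, unit $w\in F_x$, unit $v\in E_x$, $t\ge0$; and $E_x\subset\operatorname{Int}C\cup\{0\}$, $F_x\cap C=\{0\}$ for all $x\in K$. *)

From HB Require Import structures.
From mathcomp Require Import all_boot all_order all_algebra.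
From mathcomp Require Import all_classical all_reals all_analysis.
Set Implicit Arguments. Unset Strict Implicit. Unset Printing Implicit Defensive.
Import Order.TTheory GRing.Theory Num.Theory.
Import numFieldNormedType.Exports.
Local Open Scope classical_set_scope.
Local Open Scope ring_scope.

Section Defs.
Variables (R : realType) (n : nat).
Notation V := 'rV[R]_n.

Definition enorm (v : V) : R := Num.sqrt (\sum_(i < n) v ord0 i ^+ 2).

Definition usphere : set V := [set v | enorm v = 1].

(* d(v,B) = inf_{w in B} ||v - w|| (extended-real valued; = +oo if B empty) *)
Definition dist_set (v : V) (B : set V) : \bar R :=
  ereal_inf [set (enorm (v - w))%:E | w in B].

Definition vsset (W : {vspace V}) : set V := [set v | v \in W].

Definition k_cone (k : nat) (C : set V) : Prop :=
  [/\ closed C,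
      (forall v l, C v -> C (l *: v)),
      (exists W : {vspace V}, \dim W = k /\ vsset W `<=` C) &
      (forall W : {vspace V}, vsset W `<=` C -> (\dim W <= k)%N)].

Definition cone_rel (C : set V) (x y : V) : Prop := C (x - y).
Definition cone_rel_int (C : set V) (x y : V) : Prop := interior C (x - y).

Definition is_flow (Phi : R -> V -> V) : Prop :=
  (forall x, Phi 0 x = x) /\ (forall s t x, Phi (s + t) x = Phi s (Phi t x)).

Definition strongly_monotone (Phi : R -> V -> V) (C : set V) : Prop :=
  (forall x y t, 0 <= t -> cone_rel C x y -> cone_rel C (Phi t x) (Phi t y)) /\
  (forall x y t, 0 < t -> x != y -> cone_rel C x y ->
                  cone_rel_int C (Phi t x) (Phi t y)).

Definition joint (Phi : R -> V -> V) : R * V -> V := fun p => Phi p.1 p.2.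

(* C^{1,alpha}: (t,x) |-> Phi_t(x) is C^1 and its derivative is locally
   alpha-Hoelder (in operator norm, Euclidean norm on R^n, max norm on R x R^n). *)
Definition C1alpha (Phi : R -> V -> V) (alpha : R) : Prop :=
  let G := joint Phi in
  [/\ (forall p, differentiable G p),
      (forall p (e : R), 0 < e -> exists2 d : R, 0 < d & forall q, `|q - p| < d ->
          forall h, enorm ('d G q h - 'd G p h) <= e * `|h|) &
      (forall p, exists r : R, exists L : R, 0 < r /\
          forall q1 q2, `|q1 - p| < r -> `|q2 - p| < r ->
          forall h, enorm ('d G q1 h - 'd G q2 h) <= L * (`|q1 - q2| `^ alpha) * `|h|)].

Definition DPhi (Phi : R -> V -> V) (t : R) (x v : V) : V := 'd (Phi t) x v.

Definition FWW (Phi : R -> V -> V) (alpha : R) (k : nat) (C : set V) : Prop :=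
  (0 < alpha <= 1) /\ [/\ is_flow Phi, C1alpha Phi alpha, k_cone k C,
      strongly_monotone Phi C &
      (forall t x v, 0 < t -> C v -> v != 0 -> interior C (DPhi Phi t x v))].

Definition flow_invariant (Phi : R -> V -> V) (K : set V) : Prop :=
  forall t, Phi t @` K = K.

Definition gap (A B : {vspace V}) : \bar R :=
  maxe (ereal_sup [set dist_set u (vsset B) | u in vsset A `&` usphere])
       (ereal_sup [set dist_set u (vsset A) | u in vsset B `&` usphere]).

Definition gap_continuous_on (K : set V) (E : V -> {vspace V}) : Prop :=
  forall x, K x -> forall e : R, 0 < e -> exists2 d : R, 0 < d &
    forall y, K y -> enorm (y - x) < d -> (gap (E x) (E y) < e%:E)%E.

Definition exp_separation (Phi : R -> V -> V) (K : set V) (k : nat) (C : set V)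
    (E F : V -> {vspace V}) : Prop :=
  (forall x, K x -> \dim (E x) = k /\ \dim (F x) = (n - k)%N) /\
  [/\ gap_continuous_on K E /\ gap_continuous_on K F,
      (forall x, K x -> (E x + F x = fullv)%VS /\ (E x :&: F x = 0)%VS),
      (forall x t, K x -> 0 < t ->
         (forall w, w \in E (Phi t x) <-> exists2 v, v \in E x & DPhi Phi t x v = w) /\
         (forall v, v \in F x -> DPhi Phi t x v \in F (Phi t x))),
      (exists M gamma : R, [/\ 0 < M, 0 < gamma < 1 &
         forall x t w v, K x -> 0 <= t -> w \in F x -> enorm w = 1 ->
           v \in E x -> enorm v = 1 ->
           enorm (DPhi Phi t x w) <= M * (gamma `^ t) * enorm (DPhi Phi t x v)]) &
      (forall x, K x -> (forall v, v \in E x -> v != 0 -> interior C v) /\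
                        (forall v, v \in F x -> C v -> v = 0))].

End Defs.
Arguments usphere {R n}.

From HB Require Import structures.
From mathcomp Require Import all_boot all_order all_algebra.
From mathcomp Require Import all_classical all_reals all_analysis.
From mathcomp Require Import lra.

Import Order.TTheory GRing.Theory Num.Theory.
Import numFieldNormedType.Exports.
Local Open Scope classical_set_scope.
Local Open Scope ring_scope.

(* For a single y, the unit sphere of E_y is compact and its nonzero points lie
   in the open set Int C, so a whole neighbourhood of it does.  Continuity of
   y |-> E_y in the gap metric makes this radius locally uniform in y, and
   compactness of K makes it uniform on K.  Radii are measured in the max norm
   of 'rV, which is equivalent to the Euclidean norm. *)

Section UniformRadius.
Context {R : realType}.

Lemma compact_uniform_radius {X : topologicalType} {A : set X} (P : R -> X -> Prop) :
  compact A -> (forall e e' x, e' <= e -> P e x -> P e' x) ->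
  (forall x, A x -> exists2 e, 0 < e & \forall x' \near x, P e x') ->
  exists2 e, 0 < e & forall x, A x -> P e x.
Proof.
move=> /compact_near_coveringP cover P_anti P_loc.
have : \forall e \near (0 : R)^'+, A `<=` P e.
  apply: (cover R _ P) => x Ax; have [e e0 Pe] := P_loc x Ax.
  exists ([set x' | P e x'], [set e' | e' < e]).
    by split => //; exact: nbhs_right_lt.
  by move=> [x' e'] [/= Px' e'e]; apply: P_anti Px'; exact: ltW.
move=> P_near; have [e [e0 Pe]] := filter_ex (filterI (nbhs_right_gt (0 : R)) P_near).
by exists e.
Qed.

Lemma compact_ball_subset_open {V : normedModType R} {A U : set V} :
  compact A -> open U -> A `<=` U ->
  exists2 e, 0 < e & forall a, A a -> forall v, `|v - a| < e -> U v.
Proof.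
move=> cA oU AU; apply: (compact_uniform_radius _ cA).
  by move=> e e' a e'e Ue v va; apply: Ue; exact: lt_le_trans va e'e.
move=> a Aa; have /nbhs_ballP [r /= r0 ballU] := open_nbhs_nbhs (conj oU (AU a Aa)).
exists (r / 2); first by rewrite divr_gt0.
apply/nbhs_ballP; exists (r / 2); first by rewrite /= divr_gt0.
move=> a'; rewrite -ball_normE /= => aa' v va'; apply: ballU.
rewrite -ball_normE /=; have := ler_distD a' a v; rewrite (distrC a' v); lra.
Qed.

End UniformRadius.

Section RowVectors.
Context {R : realType} {n : nat}.
Notation V := 'rV[R]_n.

Lemma rV_coord_le_norm (v : V) i : `|v ord0 i| <= `|v|.
Proof.
rewrite [X in _ <= X]/Num.Def.normr /= mx_normrE.
exact: (le_bigmax _ (fun ij : 'I_1 * 'I_n => `|v ij.1 ij.2|) (ord0, i)).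
Qed.

Lemma rV_linear_continuous (W : normedModType R) (f : {linear V -> W}) :
  continuous f.
Proof.
apply/bounded_linear_continuous/bounded_funP => r.
exists (r * \sum_(i < n) `|f 'e_i|) => x xr.
rewrite {1}(row_sum_delta x) linear_sum; apply: (le_trans (ler_norm_sum _ _ _)).
rewrite mulr_sumr; apply: ler_sum => i _; rewrite linearZ normrZ.
by apply: ler_wpM2r => //; exact: le_trans (rV_coord_le_norm x i) xr.
Qed.

Lemma vsset_closed (W : {vspace V}) : closed (vsset W).
Proof.
have -> : vsset W = (\1 - projv W)%VF @^-1` [set 0].
  apply/seteqP; split => v /=; rewrite add_lfunE opp_lfunE id_lfunE.
    by move=> vW; rewrite projv_id // subrr.
  by move=> /eqP; rewrite subr_eq0 => /eqP ->; exact: memv_proj.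
apply: (continuous_closedP _).1; first exact: rV_linear_continuous.
exact/accessible_closed_set1/hausdorff_accessible/norm_hausdorff.
Qed.

Lemma compact_subspace_annulus (W : {vspace V}) (a b : R) :
  compact (vsset W `&` [set v | a <= `|v| <= b]).
Proof.
apply: bounded_closed_compact.
  rewrite /bounded_set /= /bounded_near; near=> M => v [_ /andP[_ vb]] /=.
  by apply: le_trans vb _; near: M; apply: nbhs_pinfty_ge; rewrite num_real.
have cl_annulus : closed [set v : V | a <= `|v| <= b].
  have -> : [set v : V | a <= `|v| <= b] =
      Num.norm @^-1` ([set x | a <= x] `&` [set x | x <= b]).
    by apply/seteqP; split => v /= => [/andP[]|[-> ->]].
  apply: (continuous_closedP _).1; first exact: norm_continuous.
  exact: closedI (closed_ge (y := a)) (closed_le (y := b)).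
exact: closedI (vsset_closed W) cl_annulus.
Unshelve. all: by end_near.
Qed.

End RowVectors.

Section EuclideanNorm.
Context {R : realType} {n : nat}.
Notation V := 'rV[R]_n.

Lemma norm_le_enorm (v : V) : `|v| <= enorm v.
Proof.
rewrite [X in X <= _]/Num.Def.normr /= mx_normrE; apply: bigmax_le => [|[i j] _ /=].
  exact: sqrtr_ge0.
rewrite (ord1 i) /enorm -sqrtr_sqr ler_sqrt ?sumr_ge0 // => [|k _]; last exact: sqr_ge0.
by rewrite (bigD1 j) //= ler_wpDr //; apply: sumr_ge0 => k _; exact: sqr_ge0.
Qed.

Lemma enorm_le_norm (v : V) : enorm v <= n%:R * `|v|.
Proof.
rewrite /enorm -[X in _ <= X]ger0_norm ?mulr_ge0 // -sqrtr_sqr ler_sqrt ?sqr_ge0 //.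
apply: (@le_trans _ _ (\sum_(i < n) `|v| ^+ 2)).
  apply: ler_sum => i _; rewrite -real_normK ?num_real //.
  by rewrite lerXn2r ?nnegrE // rV_coord_le_norm.
rewrite sumr_const card_ord exprMn -[_ *+ n]mulr_natl; apply: ler_wpM2r; first exact: sqr_ge0.
by rewrite -natrX ler_nat; case: n => // m; rewrite leq_pmulr.
Qed.

Lemma near_enorm_lt (y : V) (d : R) : 0 < d -> \forall y' \near y, enorm (y' - y) < d.
Proof.
move=> d0; have n1 : 0 < n%:R + 1 :> R by rewrite ltr_wpDl.
apply/nbhs_ballP; exists (d / (n%:R + 1)); first by rewrite /= divr_gt0.
move=> y'; rewrite -ball_normE /= distrC ltr_pdivlMr // => yy'.
apply: le_lt_trans (enorm_le_norm _) _; have := normr_ge0 (y' - y); nra.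
Qed.

Lemma usphere_norm_bounds (u : V) : usphere u -> (n%:R + 1)^-1 <= `|u| <= 1.
Proof.
rewrite /usphere /= => u1; apply/andP; split; last by rewrite -u1 norm_le_enorm.
have n1 : 0 < n%:R + 1 :> R by rewrite ltr_wpDl.
rewrite -[leLHS]mul1r ler_pdivrMr //.
have := enorm_le_norm u; rewrite u1; have := normr_ge0 u; nra.
Qed.

Lemma dist_set_lt (v : V) (B : set V) (e : R) :
  (dist_set v B < e%:E)%E -> exists2 u, B u & `|v - u| < e.
Proof.
move=> /ereal_inf_lt [_ [u Bu <-]]; rewrite lte_fin => vu.
by exists u => //; exact: le_lt_trans (norm_le_enorm _) vu.
Qed.

Lemma gap_lt_approx {A B : {vspace V}} {u : V} {e : R} :
  (gap A B < e%:E)%E -> (vsset B `&` usphere) u ->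
  exists2 w, w \in A & `|u - w| < e.
Proof.
move=> ABe Bu; apply: dist_set_lt; apply: le_lt_trans ABe.
by rewrite /gap le_max; apply/orP; right; apply: ereal_sup_ubound; exists u.
Qed.

End EuclideanNorm.

Definition unit_sphere_nbhd_in {R : realType} {n : nat} (U : set 'rV[R]_n)
    (W : {vspace 'rV[R]_n}) (e : R) : Prop :=
  forall u, (vsset W `&` usphere) u -> forall v, `|v - u| < e -> U v.

Lemma unit_sphere_nbhd_in_le {R : realType} {n : nat} {U : set 'rV[R]_n}
    {W : {vspace 'rV[R]_n}} {e e' : R} :
  e' <= e -> unit_sphere_nbhd_in U W e -> unit_sphere_nbhd_in U W e'.
Proof. by move=> e'e We u Wu v vu; apply: We Wu v (lt_le_trans vu e'e). Qed.

Section ContinuousSubspaceFamily.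
Context {R : realType} {n : nat} {K U : set 'rV[R]_n}.
Context {E : 'rV[R]_n -> {vspace 'rV[R]_n}}.
Hypotheses (U_open : open U) (E_cont : gap_continuous_on K E).
Hypothesis E_in_U : forall y, K y -> forall v, v \in E y -> v != 0 -> U v.

(* Approximants in E y of unit vectors of E y' need not be unit vectors, so we
   cover a compact annulus of E y instead of its unit sphere. *)
Lemma unit_sphere_nbhd_near y : K y ->
  exists2 e, 0 < e & \forall y' \near y, K y' -> unit_sphere_nbhd_in U (E y') e.
Proof.
move=> Ky; pose r : R := (n%:R + 1)^-1.
have r0 : 0 < r by rewrite invr_gt0 ltr_wpDl.
pose A := vsset (E y) `&` [set w | r / 2 <= `|w| <= 2].
have AU : A `<=` U.
  move=> w [wE /andP[rw _]]; apply: E_in_U Ky _ wE _.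
  by apply: contraTneq rw => ->; rewrite normr0 -ltNge divr_gt0.
have [eps eps0 epsU] :=
  compact_ball_subset_open (compact_subspace_annulus _ _ _) U_open AU.
pose e := Num.min eps r / 2.
have e0 : 0 < e by rewrite divr_gt0 // lt_min eps0.
have [e_eps e_r] : e <= eps / 2 /\ e <= r / 2.
  by split; apply: ler_wpM2r; rewrite ?invr_ge0 ?ge_min ?lexx ?orbT.
have [d d0 gap_d] := E_cont y Ky e e0.
exists e => //; near=> y' => Ky' u Bu v vu.
have y'y : enorm (y' - y) < d by near: y'; exact: near_enorm_lt.
have [w wE uw] := gap_lt_approx (gap_d y' Ky' y'y) Bu.
have /andP[ru u1] := usphere_norm_bounds u Bu.2; rewrite -/r in ru.
apply: (epsU w).
  split => //; apply/andP; split.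
    by have := ler_normD (u - w) w; rewrite subrK; lra.
  by have := ler_normB u (u - w); rewrite opprB addrC subrK; lra.
by have := ler_distD u v w; lra.
Unshelve. all: by end_near.
Qed.

Lemma unit_sphere_nbhd_uniform : compact K ->
  exists2 e, 0 < e & forall y, K y -> unit_sphere_nbhd_in U (E y) e.
Proof.
move=> K_compact.
have [e e0 Ke] := compact_uniform_radius
  (fun e y => K y -> unit_sphere_nbhd_in U (E y) e) K_compact
  (fun e e' y e'e Ne Ky => unit_sphere_nbhd_in_le e'e (Ne Ky))
  unit_sphere_nbhd_near.
by exists e => // y Ky; exact: Ke.
Qed.

End ContinuousSubspaceFamily.

Theorem lemma3p3 (R : realType) (n k : nat) (Phi : R -> 'rV[R]_n -> 'rV[R]_n)
    (alpha : R) (C K : set 'rV[R]_n) (E F : 'rV[R]_n -> {vspace 'rV[R]_n}) :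
  FWW Phi alpha k C ->
  compact K -> flow_invariant Phi K ->
  exp_separation Phi K k C E F ->
  exists2 delta' : R, 0 < delta' &
    forall y, K y -> forall v : 'rV[R]_n,
      (dist_set v (vsset (E y) `&` usphere) <= delta'%:E)%E -> interior C v.
Proof.
move=> _ K_compact _ [_ [[E_cont _] _ _ _ EF_cone]].
have [e e0 He] := unit_sphere_nbhd_uniform (open_interior C) E_cont
  (fun y Ky => (EF_cone y Ky).1) K_compact.
exists (e / 2) => [|y Ky v vE]; first by rewrite divr_gt0.
have [u Bu vu] : exists2 u, (vsset (E y) `&` usphere) u & `|v - u| < e.
  by apply: dist_set_lt; apply: le_lt_trans vE _; rewrite lte_fin; lra.
exact: He Ky u Bu v vu.
Qed.
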